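(* Let $(X,r)$ be a finite non-degenerate solution and $a,a',b,b'\in A=A(X,r)$. (1) If $\sigma_a=\sigma_{a'}$ and $\lambda_a=\lambda_{a'}$, then $\lambda_{a\circ b}=\lambda_{a'\circ b}$, $\rho_{b\circ a}=\rho_{b\circ a'}$, $\sigma_{b\circ a}=\sigma_{b\circ a'}$, $\lambda_{a+b}=\lambda_{a'+b}$, $\rho_{a+b}=\rho_{a'+b}$ and $\sigma_{a+b}=\sigma_{a'+b}$. (2) If $\sigma_b=\sigma_{b'}$ and $\lambda_b=\lambda_{b'}$, then $\lambda_{a\circ b}=\lambda_{a\circ b'}$, $\rho_{b\circ a}=\rho_{b'\circ a}$, $\sigma_{b\circ a}=\sigma_{b'\circ a}$, $\lambda_{a+b}=\lambda_{a+b'}$, $\rho_{a+b}=\rho_{a+b'}$ and $\sigma_{a+b}=\sigma_{a+b'}$.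
   Context: A set-theoretic solution $(X,r)$ of the Yang--Baxter equation: $X$ non-empty, $r\colon X\times X\to X\times X$ satisfying $(r\times\mathrm{id})(\mathrm{id}\times r)(r\times\mathrm{id})=(\mathrm{id}\times r)(r\times\mathrm{id})(\mathrm{id}\times r)$; write $r(x,y)=(\lambda_x(y),\rho_y(x))$; non-degenerate means $r$ bijective and all $\lambda_x,\rho_y$ bijective. Put $\sigma_y(x)=\lambda_y\rho_{\lambda_x^{-1}(y)}(x)$. Let $M$ be the monoid with presentation $\langle X\mid x\circ y=\lambda_x(y)\circ\rho_y(x)\ (x,y\in X)\rangle$ and $A$ the monoid $\langle X\mid x+y=y+\sigma_y(x)\ (x,y\in X)\rangle$. The following known structure is used: there is a bijection $M\to A$ fixing $X$; identifying $M$ and $A$ through it, the set $A$ carries two monoid operations $\circ$ and $+$ with common identity, and maps $a\mapsto\lambda_a$ (a monoid morphism $(A,\circ)\to\mathrm{Aut}(A,+)$), $a\mapsto\rho_a$ (a monoid anti-morphism $(A,\circ)\to\mathrm{Sym}(A)$) and $a\mapsto\sigma_a$ (a monoid anti-morphism $(A,+)\to\mathrm{Aut}(A,+)$), extending the given maps on $X$, such that for all $a,b,c\in A$: $a\circ b=a+\lambda_a(b)$, $a\circ b=\lambda_a(b)\circ\rho_b(a)$, $a+b=b+\sigma_b(a)$, $\sigma_{\lambda_a(b)}\lambda_a=\lambda_a\sigma_b$, $\lambda_a\lambda_b=\lambda_{\lambda_a(b)}\lambda_{\rho_b(a)}$, and $\sigma_b(a)=\lambda_b\rho_{\lambda_a^{-1}(b)}(a)$.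 All these maps are bijections of $A$ mapping $X$ onto $X$. *)

From mathcomp Require Import all_boot.
Set Implicit Arguments. Unset Strict Implicit. Unset Printing Implicit Defensive.

(* A set-theoretic solution on X is encoded by lamX, rhoX : X -> X -> X with
   r(x,y) = (lamX x y, rhoX y x). *)
Section Defs.
Variable X : Type.
Variables lamX rhoX : X -> X -> X.

Definition rXX (p : X * X) : X * X := (lamX p.1 p.2, rhoX p.2 p.1).
Definition r12 (t : X * X * X) : X * X * X :=
  let p := rXX (t.1.1, t.1.2) in (p.1, p.2, t.2).
Definition r23 (t : X * X * X) : X * X * X :=
  let p := rXX (t.1.2, t.2) in (t.1.1, p.1, p.2).

Definition is_YBE_solution : Prop :=
  forall t, r12 (r23 (r12 t)) = r23 (r12 (r23 t)).

Definition nondegenerate : Prop :=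
  bijective rXX /\ (forall x, bijective (lamX x)) /\ (forall y, bijective (rhoX y)).

(* sigX y x = lamX y (rhoX (lamX x ^-1 y) x), written with y := lamX x z *)
Definition is_sigma (sigX : X -> X -> X) : Prop :=
  forall x z, sigX (lamX x z) x = lamX (lamX x z) (rhoX z x).
End Defs.

Definition is_monoid (T : Type) (op : T -> T -> T) (e : T) : Prop :=
  associative op /\ left_id e op /\ right_id e op.

Definition presented_by (X T : Type) (op : T -> T -> T) (e : T) (g : X -> T)
    (rel : X -> X -> X * X) : Prop :=
  is_monoid op e /\
  (forall x y, op (g x) (g y) = op (g (rel x y).1) (g (rel x y).2)) /\
  (forall (N : Type) (opN : N -> N -> N) (eN : N) (h : X -> N),
     is_monoid opN eN ->
     (forall x y, opN (h x) (h y) = opN (h (rel x y).1) (h (rel x y).2)) ->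
     exists! f : T -> N,
       (f e = eN /\ forall a b, f (op a b) = opN (f a) (f b)) /\
       forall x, f (g x) = h x).

(* The structure (A, o, +, lambda, rho, sigma) of the structure monoid
   A = A(X,r) as described in the context, with the bijection M -> A
   used as an identification (A carries both presentations via iota). *)
Definition structure_algebra (X : Type) (lamX rhoX sigX : X -> X -> X)
    (A : Type) (iota : X -> A) (comp add : A -> A -> A) (e : A)
    (lam rho sig : A -> A -> A) : Prop :=
  presented_by comp e iota (fun x y => (lamX x y, rhoX y x)) /\
  presented_by add e iota (fun x y => (y, sigX y x)) /\
  (forall a, bijective (lam a)) /\
  (forall a b c, lam a (add b c) = add (lam a b) (lam a c)) /\
  (forall c, lam e c = c) /\
  (forall a b c, lam (comp a b) c = lam a (lam b c)) /\
  (forall a, bijective (rho a)) /\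
  (forall c, rho e c = c) /\
  (forall a b c, rho (comp a b) c = rho b (rho a c)) /\
  (forall a, bijective (sig a)) /\
  (forall a b c, sig a (add b c) = add (sig a b) (sig a c)) /\
  (forall c, sig e c = c) /\
  (forall a b c, sig (add a b) c = sig b (sig a c)) /\
  (forall x y, lam (iota x) (iota y) = iota (lamX x y)) /\
  (forall x y, rho (iota y) (iota x) = iota (rhoX y x)) /\
  (forall x y, sig (iota y) (iota x) = iota (sigX y x)) /\
  (forall a b, comp a b = add a (lam a b)) /\
  (forall a b, comp a b = comp (lam a b) (rho b a)) /\
  (forall a b, add a b = add b (sig b a)) /\
  (forall a b c, sig (lam a b) (lam a c) = lam a (sig b c)) /\
  (forall a b c, lam a (lam b c) = lam (lam a b) (lam (rho b a) c)) /\
  (* sig_b(a) = lam_b rho_{lam_a^{-1}(b)}(a), written with b := lam_a c *)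
  (forall a c, sig (lam a c) a = lam (lam a c) (rho c a)).

From mathcomp Require Import all_boot fingroup perm.
From Stdlib Require Import ProofIrrelevance FunctionalExtensionality.

Set Implicit Arguments.
Unset Strict Implicit.
Unset Printing Implicit Defensive.

(* Put T z := lam_z^-1(z) on X.  The Yang-Baxter equation makes T surjective,
   hence a permutation of the finite set X, and the permutation reflects the
   identifications made by iota : X -> A.  Thus an element iota z of A is
   determined by any t with lam_(iota z)(t) = iota z.  For a' with the same
   sigma and lambda as a, the computation lam_(rho_a(x))(t) = rho_a(x) with
   t = lam_a^-1 sigma_a lam_x^-1(x) then forces rho_a(x) = rho_a'(x) on
   generators; by induction on y the pairs lam_y a, lam_y a' again share sigma
   and lambda, and the identity sigma_(lam_y a)(y) = lam_(lam_y a)(rho_a y)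
   gives rho_a = rho_a'.  Every map in the statement is a composite of the
   maps attached to a and b, so the claims follow. *)

Lemma presented_by_ind (X T : Type) (op : T -> T -> T) (e : T) (g : X -> T)
    (rel : X -> X -> X * X) :
  presented_by op e g rel ->
  forall P : T -> Prop, P e -> (forall x, P (g x)) ->
  (forall a b, P a -> P b -> P (op a b)) -> forall a, P a.
Proof.
move=> [[opA [op1 op0]] [op_rel univ]] P Pe Pg Pop.
pose N := {a : T | P a}.
have val_inj (u v : N) : proj1_sig u = proj1_sig v -> u = v.
  by case: u v => [u pu] [v pv] /= E; subst v; rewrite (proof_irrelevance _ pu pv).
pose opN (u v : N) : N :=
  exist _ (op (proj1_sig u) (proj1_sig v)) (Pop _ _ (proj2_sig u) (proj2_sig v)).
have monN : is_monoid opN (exist _ e Pe).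
  split; first by move=> u v w; apply: val_inj => /=; rewrite opA.
  by split=> u; apply: val_inj => /=; rewrite ?op1 ?op0.
have relN x y : opN (exist _ (g x) (Pg x)) (exist _ (g y) (Pg y)) =
    opN (exist _ (g (rel x y).1) (Pg _)) (exist _ (g (rel x y).2) (Pg _)).
  by apply: val_inj => /=; rewrite op_rel.
have [f [[[fe fop] fg] _]] := univ N opN _ _ monN relN.
have [F [_ F_uniq]] := univ T op e g (conj opA (conj op1 op0)) op_rel.
(* Both the identity and [proj1_sig \o f] are endomorphisms extending g. *)
have Fid : F = id by apply: F_uniq.
have Ff : F = fun a => proj1_sig (f a).
  apply: F_uniq; split; last by move=> x; rewrite fg.
  by split; [rewrite fe | move=> b c; rewrite fop].
have fK a : proj1_sig (f a) = a by have /(congr1 (@^~ a)) := Ff; rewrite Fid => <-.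
by move=> a; rewrite -(fK a); exact: proj2_sig.
Qed.

Lemma fin_surj_inj (T : finType) (f : T -> T) :
  (forall y, exists x, f x = y) -> injective f.
Proof.
move=> f_surj x y; apply: (image_injP (A := T)) => //.
rewrite cardT eq_cardT // => z; have [w <-] := f_surj z; exact: codom_f.
Qed.

Lemma fin_inj_ker_reflect (T : finType) (U : Type) (f : T -> T) (g : T -> U) :
  injective f -> (forall x y, g x = g y -> g (f x) = g (f y)) ->
  forall x y, g (f x) = g (f y) -> g x = g y.
Proof.
move=> f_inj g_f x y.
pose p := perm f_inj.
have iter_order z : iter #[p]%g.-1 f (f z) = z.
  rewrite -iterSr prednK ?order_gt0 //.
  by rewrite -(eq_iter (permE f_inj)) -permX expg_order perm1.
rewrite -{2}(iter_order x) -{2}(iter_order y).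
by elim: #[p]%g.-1 => // n IHn /IHn /g_f.
Qed.

Section DiagonalInverse.

Variables (X : finType) (lamX rhoX : X -> X -> X).
Hypotheses (ybe : is_YBE_solution lamX rhoX) (nd : nondegenerate lamX rhoX).

(* The default [z] is never used, since [lamX z] is bijective. *)
Definition lam_diag_inv (z : X) : X := odflt z [pick t | lamX z t == z].

Lemma lam_diag_invK z : lamX z (lam_diag_inv z) = z.
Proof.
rewrite /lam_diag_inv; case: pickP => [t /eqP // | no_t].
have [_ [lam_bij _]] := nd; have [g _ gK] := lam_bij z.
by have := no_t (g z); rewrite gK eqxx.
Qed.

Lemma lam_diag_inv_surj t : exists w, lam_diag_inv w = t.
Proof.
have [_ [lam_bij rho_bij]] := nd.
have [gr _ grK] := rho_bij t; have [gl _ lgK] := lam_bij t.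
pose w := lamX (gr t) t.
(* First component of the braid relation at (gr t, t, gl t). *)
have w_fixed : lamX w t = w.
  have := f_equal (fun u => u.1.1) (ybe (gr t, t, gl t)).
  by rewrite /r12 /r23 /rXX /= grK lgK.
exists w; have [g gK _] := lam_bij w.
by rewrite -[lam_diag_inv w]gK lam_diag_invK -{1}w_fixed gK.
Qed.

Lemma lam_diag_inv_inj : injective lam_diag_inv.
Proof. exact: fin_surj_inj lam_diag_inv_surj. Qed.

End DiagonalInverse.

Lemma iota_lam_fixed_uniq (X : finType) (lamX rhoX : X -> X -> X) (A : Type)
    (iota : X -> A) (lam : A -> A -> A) :
  is_YBE_solution lamX rhoX -> nondegenerate lamX rhoX ->
  (forall a, injective (lam a)) ->
  (forall x y, lam (iota x) (iota y) = iota (lamX x y)) ->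
  forall z1 z2 t, lam (iota z1) t = iota z1 -> lam (iota z2) t = iota z2 ->
  iota z1 = iota z2.
Proof.
move=> ybe nd lam_inj lam_iota.
have fixedE z t : lam (iota z) t = iota z -> t = iota (lam_diag_inv lamX z).
  by move=> fix_t; apply: (lam_inj (iota z)); rewrite fix_t lam_iota (lam_diag_invK nd).
move=> z1 z2 t /fixedE -> /fixedE; apply: fin_inj_ker_reflect.
  exact: lam_diag_inv_inj.
move=> x y Exy; apply: (lam_inj (iota x)).
by rewrite {2}Exy !lam_iota !(lam_diag_invK nd).
Qed.

Section StructureAlgebra.

Variables (X : Type) (lamX rhoX : X -> X -> X) (A : Type) (iota : X -> A).
Variables (comp add : A -> A -> A) (e : A) (lam rho sig : A -> A -> A).

Hypotheses
  (comp_presented : presented_by comp e iota (fun x y => (lamX x y, rhoX y x)))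
  (lam_bij : forall a, bijective (lam a))
  (lam_e : forall c, lam e c = c)
  (lamM : forall a b c, lam (comp a b) c = lam a (lam b c))
  (rho_e : forall c, rho e c = c)
  (rhoM : forall a b c, rho (comp a b) c = rho b (rho a c))
  (sigD : forall a b c, sig (add a b) c = sig b (sig a c))
  (rho_iota : forall x y, rho (iota y) (iota x) = iota (rhoX y x))
  (comp_addE : forall a b, comp a b = add a (lam a b))
  (addC_sig : forall a b, add a b = add b (sig b a))
  (sig_lam : forall a b c, sig (lam a b) (lam a c) = lam a (sig b c))
  (lam_lam : forall a b c, lam a (lam b c) = lam (lam a b) (lam (rho b a) c))
  (sig_lam_rho : forall a c, sig (lam a c) a = lam (lam a c) (rho c a)).

Lemma lam_onto a b : exists c, lam a c = b.
Proof. by have [g _ gK] := lam_bij a; exists (g b). Qed.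

Lemma add_compE a b c : lam a c = b -> add a b = comp a c.
Proof. by move=> <-; rewrite comp_addE. Qed.

Lemma rho_iota_closed a x : exists z, rho a (iota x) = iota z.
Proof.
elim/(presented_by_ind comp_presented): a x => [x | y x | a b IHa IHb x].
- by exists x; rewrite rho_e.
- by exists (rhoX y x); rewrite rho_iota.
- have [z Ez] := IHa x; have [z' Ez'] := IHb z.
  by exists z'; rewrite rhoM Ez Ez'.
Qed.

Lemma lam_rho_iota_fixed c x t u :
  lam (iota x) u = iota x -> lam c t = sig c u ->
  lam (rho c (iota x)) t = rho c (iota x).
Proof.
move=> fix_u Et; apply: (bij_inj (lam_bij (lam (iota x) c))).
by rewrite -lam_lam Et -sig_lam fix_u sig_lam_rho.
Qed.

(* Finiteness of X enters only through this hypothesis (see the lemma of the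
   same shape proved above for finite solutions). *)
Hypothesis fixed_iota_uniq : forall z1 z2 t,
  lam (iota z1) t = iota z1 -> lam (iota z2) t = iota z2 -> iota z1 = iota z2.

Lemma rho_iota_congr a a' x :
  sig a = sig a' -> lam a = lam a' -> rho a (iota x) = rho a' (iota x).
Proof.
move=> Es El; have [u fix_u] := lam_onto (iota x) (iota x).
have [t Et] := lam_onto a (sig a u).
have [z Ez] := rho_iota_closed a x; have [z' Ez'] := rho_iota_closed a' x.
rewrite Ez Ez'; apply: (fixed_iota_uniq (t := t)).
  by rewrite -Ez (lam_rho_iota_fixed fix_u Et).
by rewrite -Ez' (lam_rho_iota_fixed fix_u) // -El -Es.
Qed.

Lemma lam_sig_congr y a a' : sig a = sig a' -> lam a = lam a' ->
  sig (lam y a) = sig (lam y a') /\ lam (lam y a) = lam (lam y a').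
Proof.
elim/(presented_by_ind comp_presented): y a a' => [| x | y1 y2 IH1 IH2] a a' Es El.
- by rewrite !lam_e.
- split; apply: functional_extensionality => c.
    by have [d <-] := lam_onto (iota x) c; rewrite !sig_lam Es.
  have [d <-] := lam_onto (rho a (iota x)) c.
  by rewrite -lam_lam El (rho_iota_congr x Es El) lam_lam.
- by rewrite !lamM; have [Es2 El2] := IH2 a a' Es El; exact: IH1.
Qed.

Lemma rho_congr a a' : sig a = sig a' -> lam a = lam a' -> rho a = rho a'.
Proof.
move=> Es El; apply: functional_extensionality => y.
have [Es' El'] := lam_sig_congr y Es El.
by apply: (bij_inj (lam_bij (lam y a))); rewrite -sig_lam_rho Es' El' sig_lam_rho.
Qed.

Lemma structure_maps_congr_l a a' b : sig a = sig a' -> lam a = lam a' ->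
  lam (comp a b) = lam (comp a' b) /\
  rho (comp b a) = rho (comp b a') /\
  sig (comp b a) = sig (comp b a') /\
  lam (add a b) = lam (add a' b) /\
  rho (add a b) = rho (add a' b) /\
  sig (add a b) = sig (add a' b).
Proof.
move=> Es El; have Er := rho_congr Es El.
have [Esb _] := lam_sig_congr b Es El.
have [c Ec] := lam_onto a b; have Ec' : lam a' c = b by rewrite -El.
split; [|split; [|split; [|split; [|split]]]];
  apply: functional_extensionality => d.
- by rewrite !lamM El.
- by rewrite !rhoM Er.
- by rewrite !comp_addE !sigD Esb.
- by rewrite (add_compE Ec) (add_compE Ec') !lamM El.
- by rewrite (add_compE Ec) (add_compE Ec') !rhoM Er.
- by rewrite !sigD Es.
Qed.

Lemma structure_maps_congr_r a b b' : sig b = sig b' -> lam b = lam b' ->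
  lam (comp a b) = lam (comp a b') /\
  rho (comp b a) = rho (comp b' a) /\
  sig (comp b a) = sig (comp b' a) /\
  lam (add a b) = lam (add a b') /\
  rho (add a b) = rho (add a b') /\
  sig (add a b) = sig (add a b').
Proof.
move=> Es El; have Er := rho_congr Es El.
have [c Ec] := lam_onto b (sig b a); have Ec' : lam b' c = sig b' a by rewrite -El -Es.
have addE : add a b = comp b c by rewrite addC_sig (add_compE Ec).
have addE' : add a b' = comp b' c by rewrite addC_sig (add_compE Ec').
split; [|split; [|split; [|split; [|split]]]];
  apply: functional_extensionality => d.
- by rewrite !lamM El.
- by rewrite !rhoM Er.
- by rewrite !comp_addE !sigD El Es.
- by rewrite addE addE' !lamM El.
- by rewrite addE addE' !rhoM Er.
- by rewrite !sigD Es.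
Qed.

End StructureAlgebra.

Theorem lemma2p2 (X : finType) (lamX rhoX sigX : X -> X -> X)
    (A : Type) (iota : X -> A) (comp add : A -> A -> A) (e : A)
    (lam rho sig : A -> A -> A) :
  is_YBE_solution lamX rhoX ->
  nondegenerate lamX rhoX ->
  is_sigma lamX rhoX sigX ->
  structure_algebra lamX rhoX sigX iota comp add e lam rho sig ->
  forall a a' b b' : A,
    (sig a = sig a' -> lam a = lam a' ->
       (lam (comp a b) = lam (comp a' b) /\
           rho (comp b a) = rho (comp b a') /\
           sig (comp b a) = sig (comp b a') /\
           lam (add a b) = lam (add a' b) /\
           rho (add a b) = rho (add a' b) /\
           sig (add a b) = sig (add a' b))) /\
    (sig b = sig b' -> lam b = lam b' ->
       (lam (comp a b) = lam (comp a b') /\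
           rho (comp b a) = rho (comp b' a) /\
           sig (comp b a) = sig (comp b' a) /\
           lam (add a b) = lam (add a b') /\
           rho (add a b) = rho (add a b') /\
           sig (add a b) = sig (add a b'))).
Proof.
move=> ybe nd _ [comp_pres [_ [lam_bij [_ [lam_e [lamM [_ [rho_e [rhoM [_ [_ [_
  [sigD [lam_iota [rho_iota [_ [comp_addE [_ [addC_sig [sig_lam [lam_lam
  sig_lam_rho]]]]]]]]]]]]]]]]]]]]] a a' b b'.
have fixed_uniq := iota_lam_fixed_uniq ybe nd (fun a => bij_inj (lam_bij a)) lam_iota.
split; [eapply structure_maps_congr_l | eapply structure_maps_congr_r]; eassumption.
Qed.
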